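(* Let $a_1,a_2,\dots$ be positive integers. For all $n\ge 2$, $Q_n(x)=p_n(x,x+1)$.
   Context: Fix positive integers $a_1,a_2,\dots$. Define polynomials $Q_n(x)\in\mathbb{Z}[x]$ by $Q_0(x)=1$, $Q_1(x)=x+a_1$, and $Q_n(x)=(-1)^{n+1}a_nQ_{n-1}(x)+x(x+1)Q_{n-2}(x)$ for $n\ge 2$. Equivalently, $Q_n(x)$ is the determinant of the $n\times n$ tridiagonal matrix $M_n=(m_{ij})$ defined by: - $m_{11}=x+a_1$ and $m_{kk}=(-1)^{k+1}a_k$ for $k\ge 2$; - $m_{i,i+1}=-(x+1)$ for odd $i$ and $m_{i,i+1}=-x$ for even $i$; - $m_{i,i-1}=x$ for even $i$ and $m_{i,i-1}=x+1$ for odd $i\ge3$; - all other entries $0$. For $n\ge1$, $1\le l\le n$, let $I_{n,l}$ be the set of strictly increasing sequences $(t_1,\dots,t_l)$ in $\{1,\dots,n\}$ with $t_i\equiv n+i-l\pmod 2$ for all $i$. Let $a_{\mathbf t}=a_{t_1}\cdots a_{t_l}$ and $\gamma_n(l)=\sum_{\mathbf t\in I_{n,l}}a_{\mathbf t}$, with $\gamma_n(0)=1$. For $n\ge2$ write $n=2m+r_0$ with $r_0\in\{0,1\}$ and $r_1=1-r_0$, and define $$p_n(x,y)=x^{r_0}\sum_{k=0}^{m}(-1)^{m-k}x^ky^k\gamma_n(n-2k-r_0)+x^{r_1}\sum_{k=0}^{m-r_1}(-1)^{m-k}x^ky^k\gamma_n(n-2k-r_1).$$ *)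

From HB Require Import structures.
From mathcomp Require Import all_boot all_order all_algebra.
Set Implicit Arguments. Unset Strict Implicit. Unset Printing Implicit Defensive.
Import Order.TTheory GRing.Theory Num.Theory.
Local Open Scope ring_scope.

(* The sequence a_1, a_2, ... is a : nat -> nat; a 0 is unused. *)

(* Qpair a n = (Q_n, Q_{n+1}) *)
Fixpoint Qpair (a : nat -> nat) (n : nat) : {poly int} * {poly int} :=
  match n with
  | 0%N => (1, 'X + (a 1%N)%:Z%:P)
  | k.+1 => let (q0, q1) := Qpair a k in
            (q1, (-1) ^+ (k.+2.+1) * (a k.+2)%:Z%:P * q1 + 'X * ('X + 1) * q0)
  end.

Definition Q (a : nat -> nat) (n : nat) : {poly int} := (Qpair a n).1.

(* A tuple entry j : 'I_n
   encodes the value j+1; the position i : 'I_l encodes the index i+1. *)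
Definition gamma (a : nat -> nat) (n l : nat) : int :=
  \sum_(t : l.-tuple 'I_n |
          sorted ltn (map (fun j : 'I_n => (val j).+1) t) &&
          [forall i : 'I_l, ((val (tnth t i)).+1 == (n + i.+1 - l)%N %[mod 2])%N])
     \prod_(i < l) (a (val (tnth t i)).+1)%:Z.

Definition p (R : comRingType) (a : nat -> nat) (n : nat) (x y : R) : R :=
  let r0 := odd n in
  let r1 := (1 - r0)%N in
  let m := n./2 in
  x ^+ r0 * \sum_(k < m.+1)
      (-1) ^+ (m - k)%N * x ^+ k * y ^+ k * (gamma a n (n - 2 * k - r0)%N)%:~R
  + x ^+ r1 * \sum_(k < (m - r1).+1)
      (-1) ^+ (m - k)%N * x ^+ k * y ^+ k * (gamma a n (n - 2 * k - r1)%N)%:~R.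

From HB Require Import structures.
From mathcomp Require Import all_boot all_order all_algebra.
From mathcomp Require Import zify ring.
Import GRing.Theory.
Local Open Scope ring_scope.

(* Splitting the index sequences of [gamma_{n+1}(l+1)] according to whether the last
   index is [n + 1] gives [gamma_{n+1}(l+1) = a_{n+1} gamma_n(l) + gamma_{n-1}(l+1)]: by the
   parity constraint a last index other than [n + 1] is at most [n - 1].  Grouping
   [p_n(x, y)] by [l] writes it as a sum of [gamma_n(l)] times signed monomials in [x] and
   [x y]; this recurrence then shows that the sum obeys the recurrence of [Q_n], with
   [x (x + 1)] replaced by [x y], and the initial values agree. *)

Lemma eqn_mod2_odd (u v : nat) : (u == v %[mod 2])%N = (odd u == odd v).
Proof. by rewrite !modn2; case: (odd u); case: (odd v). Qed.

Lemma signr_odd_eq (R : pzRingType) i j : odd i = odd j -> (-1) ^+ i = (-1) ^+ j :> R.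
Proof. by move=> odd_ij; rewrite -signr_odd odd_ij signr_odd. Qed.

Lemma sorted_map_succ (s : seq nat) : sorted ltn (map succn s) = sorted ltn s.
Proof. exact: (mono_sorted (fun x y => ltnS x.+1 y)). Qed.

Lemma sorted_ltn_rcons s x :
  sorted ltn (rcons s x) = sorted ltn s && all (fun v => v < x)%N s.
Proof.
elim: s => //= y s IHs.
rewrite !path_sortedE; [|exact: ltn_trans|exact: ltn_trans].
by rewrite IHs all_rcons /=; case: (all (ltn y) s); case: (sorted ltn s);
  case: (all _ s); rewrite /= ?andbT ?andbF.
Qed.

Lemma leq_size_sorted_ltn {N s} :
  sorted ltn s -> all (fun v => v < N)%N s -> (size s <= N)%N.
Proof.
move=> s_sorted s_lt; rewrite -(size_iota 0 N).
apply: uniq_leq_size (sorted_uniq ltn_trans ltnn s_sorted) _ => v v_s.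
by rewrite mem_iota (allP s_lt v v_s).
Qed.

Lemma all_tuple_ltn {N l} (t : l.-tuple 'I_N) : all (fun v => v < N)%N (map val t).
Proof. by apply/allP => _ /mapP [i _ ->]; apply: ltn_ord. Qed.

Section TupleSums.

Variable a : nat -> nat.

Definition weight (s : seq nat) : int := \prod_(v <- s) (a v.+1)%:Z.

Definition tuple_sum N l (P : pred (seq nat)) : int :=
  \sum_(t : l.-tuple 'I_N | P (map val t)) weight (map val t).

Lemma eq_tuple_sum N l (P P' : pred (seq nat)) :
    (forall t : l.-tuple 'I_N, P (map val t) = P' (map val t)) ->
  tuple_sum N l P = tuple_sum N l P'.
Proof. by move=> eqP'; apply: eq_bigl => t; rewrite eqP'. Qed.

Lemma tuple_sum0 N (P : pred (seq nat)) : tuple_sum N 0 P = (P [::])%:R.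
Proof.
rewrite /tuple_sum big_mkcond /= (big_pred1 [tuple]) => [|t]; last first.
  by rewrite [t]tuple0; apply/esym/eqP.
by rewrite /weight big_nil; case: (P _).
Qed.

Lemma drop_last_subproof {N l} (u : l.+1.-tuple 'I_N) : size (take l u) == l.
Proof. by rewrite size_takel // size_tuple. Qed.

Definition drop_last {N l} (u : l.+1.-tuple 'I_N) : l.-tuple 'I_N :=
  Tuple (drop_last_subproof u).

Lemma tuple_sum_last {N l} (x : 'I_N) (P : pred (seq nat)) :
  \sum_(t : l.+1.-tuple 'I_N | P (map val t) && (last 0%N (map val t) == x))
     weight (map val t)
  = (a x.+1)%:Z * tuple_sum N l (fun s => P (rcons s x)).
Proof.
rewrite /tuple_sum (reindex_onto (fun t : l.-tuple _ => [tuple of rcons t x]) drop_last).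
  rewrite mulr_sumr; apply: eq_big => [t|t _] /=.
    have -> : drop_last [tuple of rcons t x] = t.
      by apply: val_inj; rewrite /= -cats1 take_size_cat ?size_tuple.
    by rewrite map_rcons last_rcons !eqxx !andbT.
  by rewrite map_rcons /weight big_rcons mulrC.
move=> u /andP [_ last_u]; apply: val_inj => /=.
have : size u = l.+1 by rewrite size_tuple.
move: last_u; case/lastP: (val u) => [|s y] //.
rewrite map_rcons last_rcons size_rcons => /eqP y_x [<-].
have -> : take (size s) (rcons s y) = s by rewrite -cats1 take_size_cat.
by congr rcons; apply: val_inj.
Qed.

Lemma tuple_sum_widen M N l (P : pred (seq nat)) : (M <= N)%N ->
    (forall t : l.-tuple 'I_N, P (map val t) -> all (fun v => v < M)%N (map val t)) ->
  tuple_sum N l P = tuple_sum M l P.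
Proof.
case: M => [|M] leMN P_lt.
  case: l P P_lt => [|l] P P_lt; first by rewrite !tuple_sum0.
  rewrite /tuple_sum !big_pred0 // => t; first by case: (tnth t ord0).
  apply/negP => /P_lt /allP /(_ _ (map_f val (mem_tnth ord0 t))).
  by rewrite ltn0.
rewrite /tuple_sum (reindex_onto (fun t : l.-tuple 'I_M.+1 => [tuple of map (widen_ord leMN) t])
   (fun u : l.-tuple 'I_N => [tuple of map (fun i : 'I_N => inord (val i) : 'I_M.+1) u])) /=.
  apply: eq_big => [t|t _]; rewrite -map_comp //.
  case: (P _) => //=; apply/eqP/eq_from_tnth => i.
  by rewrite !tnth_map /= inord_val.
move=> u Pu; apply: eq_from_tnth => i; rewrite !tnth_map; apply: val_inj => /=.
by rewrite inordK //; apply: (allP (P_lt u Pu)); apply/map_f/mem_tnth.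
Qed.

End TupleSums.

(* With entries and positions counted from 0, the condition [t_i = n + i - l (mod 2)]
   of [I_{n,l}] reads [s_i + l = n + i (mod 2)]; the shift [k] plays the role of [l]. *)
Definition alternating N k (s : seq nat) :=
  all (fun i => odd (nth 0%N s i + k) == odd (N + i)) (iota 0 (size s)).

Definition admissible N (s : seq nat) := sorted ltn s && alternating N (size s) s.

Lemma alternating_rcons N k s y :
  alternating N k (rcons s y) = alternating N k s && (odd (y + k) == odd (N + size s)).
Proof.
rewrite /alternating size_rcons -addn1 iotaD all_cat /= add0n andbT nth_rcons ltnn eqxx.
congr andb; apply: eq_in_all => i; rewrite mem_iota => /andP [_ lt_i_s].
by rewrite nth_rcons lt_i_s.
Qed.

Lemma alternatingSS N k s : alternating N.+1 k.+1 s = alternating N k s.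
Proof. by apply: eq_all => i; rewrite addnS addSn /= eqb_negLR negbK. Qed.

Lemma alternatingS2 N k s : alternating N.+2 k s = alternating N k s.
Proof. by apply: eq_all => i; rewrite !addSn /= negbK. Qed.

Lemma parity_shift v i l N : (l <= N)%N ->
  (v.+1 == N + i.+1 - l %[mod 2])%N = (odd (v + l) == odd (N + i)).
Proof.
move/subnKC <-; rewrite -!addnA addKn eqn_mod2_odd !oddD /=.
by case: (odd v); case: (odd l); case: (odd (N - l)); case: (odd i).
Qed.

Lemma gamma_tuple_sum a N l : gamma a N l = tuple_sum a N l (admissible N).
Proof.
rewrite /gamma /tuple_sum; apply: eq_big => [t|t _]; last first.
  by rewrite /weight big_map big_tuple.
have -> : [seq (val j).+1 | j <- t] = map succn (map val t) by rewrite -map_comp.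
rewrite sorted_map_succ /admissible.
case s_sorted: (sorted ltn _) => //=.
have size_t : size (map val t) = l by rewrite size_map size_tuple.
have le_l_N : (l <= N)%N.
  by rewrite -size_t; apply: leq_size_sorted_ltn s_sorted (all_tuple_ltn t).
have tnthE (i : 'I_l) : val (tnth t i) = nth 0%N (map val t) i.
  by rewrite (tnth_nth (tnth t i)) (nth_map (tnth t i)) ?size_tuple.
have parityE (i : 'I_l) : ((val (tnth t i)).+1 == N + i.+1 - l %[mod 2])%N
                          = (odd (nth 0%N (map val t) i + l) == odd (N + i)).
  by rewrite parity_shift // tnthE.
rewrite /alternating size_t; apply/forallP/allP => [alt i|alt i].
  rewrite mem_iota add0n => /andP [_ lt_i_l].
  by rewrite -(parityE (Ordinal lt_i_l)); apply: alt.
by rewrite parityE; apply: alt; rewrite mem_iota add0n ltn_ord.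
Qed.

Lemma admissible_rcons N s :
  admissible N.+1 (rcons s N) = admissible N s && all (fun v => v < N)%N s.
Proof.
rewrite /admissible sorted_ltn_rcons size_rcons alternating_rcons alternatingSS.
rewrite addnS addSn eqxx andbT.
by case: (sorted _ s); case: (all _ s); case: (alternating _ _ _).
Qed.

(* The last entry of a sequence admissible for [n + 1] has the parity of [n]; so if it is
   at most [n] but not [n], it is at most [n - 2]. *)
Lemma admissible_last_neq n s : s != [::] -> all (fun v => v < n.+1)%N s ->
  admissible n.+1 s && (last 0%N s != n) = admissible n.+1 s && all (fun v => v < n.-1)%N s.
Proof.
case/lastP: s => [//|s y] _; rewrite all_rcons last_rcons => /andP [le_y_n _].
rewrite /admissible sorted_ltn_rcons size_rcons alternating_rcons all_rcons.
case s_sorted: (sorted ltn s); case s_lt: (all _ s); case: (alternating _ _ _) => //=.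
have -> : (odd (y + (size s).+1) == ~~ odd (n + size s)) = (y == n %[mod 2])%N.
  by rewrite eqn_mod2_odd addnS /= !oddD; case: (odd y); case: (odd n); case: odd.
case: eqP => //= par_y.
have -> : (y != n) = (y < n.-1)%N by apply/idP/idP; lia.
case: ltnP => //= lt_y_n; apply/esym/allP => v v_s.
by apply: leq_trans lt_y_n; apply: ltnW; apply: (allP s_lt).
Qed.

Lemma gamma0 a n : gamma a n 0 = 1.
Proof. by rewrite gamma_tuple_sum tuple_sum0. Qed.

Lemma gamma_gt a n l : (n < l)%N -> gamma a n l = 0.
Proof.
move=> lt_n_l; rewrite gamma_tuple_sum /tuple_sum big_pred0 // => t.
apply/negP => /andP [t_sorted _]; move: (leq_size_sorted_ltn t_sorted (all_tuple_ltn t)).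
by rewrite size_map size_tuple leqNgt lt_n_l.
Qed.

Lemma gammaS a n l : gamma a n.+1 l.+1 = (a n.+1)%:Z * gamma a n l + gamma a n.-1 l.+1.
Proof.
rewrite gamma_tuple_sum /tuple_sum.
rewrite (bigID (fun t : l.+1.-tuple 'I_n.+1 => last 0%N (map val t) == n)) /=.
rewrite (tuple_sum_last a (ord_max : 'I_n.+1) (admissible n.+1)); congr (_ * _ + _).
  rewrite (@eq_tuple_sum a _ _ _ (fun s => admissible n s && all (fun v => v < n)%N s));
    last by move=> t; apply: admissible_rcons.
  rewrite (@tuple_sum_widen a n) => [|//|t /andP []//].
  by rewrite gamma_tuple_sum; apply: eq_tuple_sum => t; rewrite all_tuple_ltn andbT.
rewrite (eq_bigl (fun t : l.+1.-tuple 'I_n.+1 =>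
                   admissible n.+1 (map val t) && all (fun v => v < n.-1)%N (map val t)));
  last by move=> t; rewrite admissible_last_neq ?all_tuple_ltn // -size_eq0 size_map size_tuple.
change (tuple_sum a n.+1 l.+1 (fun s => admissible n.+1 s && all (fun v => v < n.-1)%N s)
        = gamma a n.-1 l.+1).
rewrite (@tuple_sum_widen a n.-1) => [||t /andP []//]; last first.
  exact: leq_trans (leq_pred n) (leqnSn n).
rewrite gamma_tuple_sum; apply: eq_tuple_sum => t; rewrite all_tuple_ltn andbT.
case: n t => [|n] t; first by case: (tnth t ord0).
by rewrite /admissible alternatingS2.
Qed.

Lemma sum_even_odd (V : nmodType) (g : nat -> V) m :
  \sum_(l < m.*2) g l = \sum_(j < m) g j.*2 + \sum_(j < m) g j.*2.+1.
Proof.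
elim: m => [|m IHm]; first by rewrite !big_ord0 addr0.
by rewrite doubleS !big_ord_recr /= IHm addrACA !addrA.
Qed.

Lemma sum_by_parity {V : nmodType} (g : nat -> V) {n} : (0 < n)%N ->
  \sum_(l < n.+1) g l =
    \sum_(k < n./2.+1) g (n - 2 * k - odd n)%N
    + \sum_(k < (n./2 - (1 - odd n)).+1) g (n - 2 * k - (1 - odd n))%N.
Proof.
move=> n_gt0; have n_eq := odd_double_half n; rewrite -(big_mkord xpredT).
case: (odd n) n_eq => /= n_eq.
  rewrite -{1}n_eq add1n -doubleS big_mkord sum_even_odd subn0.
  congr (_ + _); rewrite (reindex_inj rev_ord_inj); apply: eq_bigr => k _ /=;
    congr g; have := ltn_ord k; lia.
rewrite add0n in n_eq; rewrite -{1}n_eq big_mkord big_ord_recr sum_even_odd /= addrAC.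
rewrite -(big_ord_recr _ (fun j => g j.*2)) subn1 prednK ?half_gt0; last lia.
congr (_ + _); rewrite (reindex_inj rev_ord_inj); apply: eq_bigr => k _ /=;
  congr g; have := ltn_ord k; lia.
Qed.

Section GammaExpansion.

Context {R : comNzRingType} (a : nat -> nat) (x y : R).

(* [coef n l] is the factor of [gamma_n(l)] in [p_n(x, y)]: writing [n - l = 2 k + r]
   with [r] in [{0, 1}], it is [(-1)^(n/2 - k) x^r (x y)^k]. *)
Definition coef n l : R :=
  (-1) ^+ (n./2 - (n - l)./2) * x ^+ odd (n - l) * (x * y) ^+ (n - l)./2.

Definition gamma_sum n : R := \sum_(l < n.+1) coef n l * (gamma a n l)%:~R.

Lemma coef_sub n k r c : (r <= 1)%N -> (2 * k + r <= n)%N ->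
  x ^+ r * ((-1) ^+ (n./2 - k) * x ^+ k * y ^+ k * c) = coef n (n - 2 * k - r) * c.
Proof.
move=> le_r_1 le_n; rewrite /coef.
have -> : (n - (n - 2 * k - r) = k.*2 + r)%N by lia.
have [-> | ->] : r = 0%N \/ r = 1%N by lia.
  by rewrite addn0 odd_double doubleK exprMn; ring.
by rewrite addn1 /= odd_double uphalf_double exprMn; ring.
Qed.

Lemma p_gamma_sum n : (0 < n)%N -> p a n x y = gamma_sum n.
Proof.
move=> n_gt0; have n_eq := odd_double_half n.
rewrite /p /gamma_sum (sum_by_parity (fun l => coef n l * (gamma a n l)%:~R) n_gt0) !mulr_sumr.
have odd_le1 := leq_b1 (odd n).
by congr (_ + _); apply: eq_bigr => k _; rewrite coef_sub //; have := ltn_ord k; lia.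
Qed.

Lemma coefS n i : (i <= n.+1)%N -> coef n.+2 i.+1 = (-1) ^+ n.+3 * coef n.+1 i.
Proof.
move=> le_i_n; rewrite /coef subSS !mulrA -exprD; congr (_ * _ * _).
by apply: signr_odd_eq; apply/eqP; rewrite -eqn_mod2_odd -!divn2; apply/eqP; lia.
Qed.

Lemma coefSS n i : (i <= n)%N -> coef n.+2 i = x * y * coef n i.
Proof.
by move=> le_i_n; rewrite /coef -addn2 -addnBAC // !addn2 /= negbK subSS exprS; ring.
Qed.

Lemma gamma_sum0 : gamma_sum 0 = 1.
Proof. by rewrite /gamma_sum big_ord1 gamma0 /coef /= !mulr1. Qed.

Lemma gamma_sum1 : gamma_sum 1 = x + (a 1)%:R.
Proof.
rewrite /gamma_sum big_ord_recr big_ord1 /= gamma0 gammaS gamma0 gamma_gt // /coef /=.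
by rewrite !(mulr1, addr0, mul1r, expr0, expr1).
Qed.

Lemma gamma_sumSS n :
  gamma_sum n.+2 = (-1) ^+ n.+3 * (a n.+2)%:R * gamma_sum n.+1 + x * y * gamma_sum n.
Proof.
have gamma_sum_trunc : \sum_(l < n.+3) coef n.+2 l * (gamma a n l)%:~R = x * y * gamma_sum n.
  rewrite 2!big_ord_recr /= !gamma_gt // !mulr0 !addr0 mulr_sumr.
  by apply: eq_bigr => i _; rewrite coefSS ?mulrA // -ltnS.
rewrite -gamma_sum_trunc /gamma_sum big_ord_recl.
rewrite (eq_bigr (fun i : 'I_n.+2 =>
                   (-1) ^+ n.+3 * (a n.+2)%:R * (coef n.+1 i * (gamma a n.+1 i)%:~R)
                   + coef n.+2 i.+1 * (gamma a n i.+1)%:~R)); last first.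
  by move=> i _; rewrite lift0 gammaS intrD intrM coefS ?leq_ord //=; ring.
rewrite big_split /= -mulr_sumr addrCA; congr (_ + _).
by rewrite [RHS]big_ord_recl !gamma0.
Qed.

End GammaExpansion.

Lemma QSS a n :
  Q a n.+2 = (-1) ^+ n.+3 * ((a n.+2)%:Z)%:P * Q a n.+1 + 'X * ('X + 1) * Q a n.
Proof. by rewrite /Q /=; case: (Qpair a n). Qed.

Lemma Q_gamma_sum a n : Q a n = gamma_sum a 'X ('X + 1) n.
Proof.
elim/ltn_ind: n => -[|[|n]] IHn; first by rewrite gamma_sum0.
  by rewrite gamma_sum1 /Q /= -natz polyC_natr.
by rewrite QSS gamma_sumSS !IHn // -natz polyC_natr.
Qed.

Theorem corollary1 (a : nat -> nat) (apos : forall i : nat, (0 < i)%N -> (0 < a i)%N)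
  (n : nat) (hn : (2 <= n)%N) :
  Q a n = p a n 'X ('X + 1).
Proof. by rewrite Q_gamma_sum p_gamma_sum // (leq_trans _ hn). Qed.
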